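(* Let $\beta:[r]\to[2n]$ be qubit-injective and $R\in B_{2n}(T_{TCR}(\beta))$. If there exist $m$, $L\in L_m(P_m)$ and an increasing $\alpha:[r]\to[m]$ such that $L\,\Pi(\alpha,\beta)=\Pi(\alpha,\beta)\,R$, then $R=I_{2n}$.
   Context: $\mathbb{F}$ is the field with two elements, $[N]=\{1,\dots,N\}$, $e_{N,i}$ standard basis column vectors, $I_N$ identity. $P_m=\{(i,j):i,j\in[m],i>j\}$, $L_m(P_m)$ the lower unitriangular $m\times m$ matrices over $\mathbb{F}$. $R_{2n}=\sum_{i=1}^{2n}e_{2n,i}e_{2n,2n+1-i}^{\top}$; $\mathrm{Sp}_{2n}=\{C:C^{\top}R_{2n}C=R_{2n}\}$. For $T\subseteq P_{2n}$ transitive and closed under reversal, $B_{2n}(T)=\big(I_{2n}+\mathrm{span}_{\mathbb{F}}\{e_{2n,i}e_{2n,j}^{\top}:(i,j)\in T\}\big)\cap\mathrm{Sp}_{2n}$. $\Pi(\alpha,\beta)=\sum_{i=1}^re_{m,\alpha(i)}e_{2n,\beta(i)}^{\top}\in\mathbb{F}^{m\times2n}$. $Q_n(i)=\min(i,2n+1-i)$; $\beta$ is qubit-injective if $Q_n\circ\beta$ is injective. $T_M(\beta)=\{(i,j):i\in\mathrm{Im}(\beta),j<i,Q_n(j)\notin\{Q_n(\beta(1)),\dots,Q_n(\beta(\beta^{-1}(i)-1))\}\}$, $T_{MR}(\beta)=\{(i,j):(2n+1-j,2n+1-i)\in T_M(\beta)\}$, $T_{TCR}(\beta)=T_M(\beta)\cup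 T_{MR}(\beta)$. *)

From HB Require Import structures.
From mathcomp Require Import all_boot all_order all_algebra.
Set Implicit Arguments. Unset Strict Implicit. Unset Printing Implicit Defensive.
Import GRing.Theory.
Local Open Scope ring_scope.

(* All indices are 0-based: [N] = {1..N} is represented by 'I_N,
   index i (1-based) corresponds to i-1 (0-based).  The field F is 'F_2. *)

(* Q_n(i) = min(i, 2n+1-i) (1-based); 0-based: min(i, 2n-1-i) = min(i, rev_ord i). *)
Definition Qn (n : nat) (i : 'I_(2 * n)) : nat := minn i (rev_ord i).

Definition qubit_injective (n r : nat) (beta : 'I_r -> 'I_(2 * n)) : Prop :=
  injective (fun k => Qn (beta k)).

Definition T_M (n r : nat) (beta : 'I_r -> 'I_(2 * n)) : rel 'I_(2 * n) :=
  fun i j => [exists k : 'I_r, [&& beta k == i, (j < i)%N &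
               [forall k' : 'I_r, (k' < k)%N ==> (Qn j != Qn (beta k'))]]].

Definition T_MR (n r : nat) (beta : 'I_r -> 'I_(2 * n)) : rel 'I_(2 * n) :=
  fun i j => T_M beta (rev_ord j) (rev_ord i).

Definition T_TCR (n r : nat) (beta : 'I_r -> 'I_(2 * n)) : rel 'I_(2 * n) :=
  fun i j => T_M beta i j || T_MR beta i j.

Definition Rform (N : nat) : 'M['F_2]_N := \matrix_(i < N, j < N) (j == rev_ord i)%:R.

Definition symplectic (n : nat) (C : 'M['F_2]_(2 * n)) : Prop :=
  C^T *m Rform (2 * n) *m C = Rform (2 * n).

Definition in_B (n : nat) (T : rel 'I_(2 * n)) (C : 'M['F_2]_(2 * n)) : Prop :=
  (forall i j, ~~ T i j -> (C - 1%:M) i j = 0) /\ symplectic C.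

Definition lower_unitri (m : nat) (L : 'M['F_2]_m) : Prop :=
  (forall i j : 'I_m, (i < j)%N -> L i j = 0) /\ (forall i : 'I_m, L i i = 1).

Definition Pimx (m n r : nat) (alpha : 'I_r -> 'I_m) (beta : 'I_r -> 'I_(2 * n))
  : 'M['F_2]_(m, 2 * n) :=
  \matrix_(a < m, b < 2 * n) \sum_(k < r) ((alpha k == a) && (beta k == b))%:R.

From HB Require Import structures.
From mathcomp Require Import all_boot all_order all_algebra.
From mathcomp Require Import zify.
Set Implicit Arguments.
Unset Strict Implicit.
Unset Printing Implicit Defensive.

Import Order.TTheory GRing.Theory.
Local Open Scope ring_scope.

(* Since [Pi(alpha, beta)] has a single 1 in row [alpha k], at column [beta k],
   the intertwining relation makes row [beta k] of [R] a copy of row [alpha k]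
   of [L], read at the columns [beta k'].  Entries with [k' > k] vanish as [L]
   is lower unitriangular and [alpha] increasing, the diagonal entry is 1, and
   entries with [k' < k] sit outside [T_TCR(beta)], where [R] agrees with the
   identity; so these rows of [R] are unit rows.  Symplecticity turns them into
   unit columns [2n+1-beta k], and every pair of [T_TCR(beta)] lies in one of
   these rows or columns. *)

Lemma rev_ord_neq n (i : 'I_(2 * n)) : rev_ord i != i.
Proof. by apply/eqP => /(congr1 val) /=; have := ltn_ord i; lia. Qed.

Lemma Qn_rev n (i : 'I_(2 * n)) : Qn (rev_ord i) = Qn i.
Proof. by rewrite /Qn rev_ordK minnC. Qed.

Lemma qubit_injective_inj n r (beta : 'I_r -> 'I_(2 * n)) :
  qubit_injective beta -> injective beta.
Proof. by move=> qinj k k' /(congr1 (@Qn n)) /qinj. Qed.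

Lemma qubit_injective_rev n r (beta : 'I_r -> 'I_(2 * n)) (k k' : 'I_r) :
  qubit_injective beta -> beta k != rev_ord (beta k').
Proof.
move=> qinj; apply/eqP => E.
have /qinj Ekk' : Qn (beta k) = Qn (beta k') by rewrite E Qn_rev.
by move: E; rewrite Ekk' => /esym/eqP; rewrite (negbTE (rev_ord_neq (beta k'))).
Qed.

Lemma Rform_sqr N : Rform N *m Rform N = 1%:M.
Proof.
apply/matrixP => i j; rewrite !mxE (bigD1 (rev_ord i)) //= big1.
  by rewrite !mxE eqxx mul1r addr0 rev_ordK eq_sym.
by move=> l /negbTE nli; rewrite !mxE nli mul0r.
Qed.

Lemma row_Rform N (i : 'I_N) : row i (Rform N) = row (rev_ord i) 1%:M.
Proof. by apply/rowP => j; rewrite !mxE eq_sym. Qed.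

Lemma symplectic_tr n (C : 'M['F_2]_(2 * n)) :
  symplectic C -> C *m Rform (2 * n) *m C^T = Rform (2 * n).
Proof.
rewrite /symplectic; set J := Rform _ => CJC.
have /mulmx1C JCJ : J *m C^T *m J *m C = 1%:M.
  by rewrite -!mulmxA (mulmxA C^T) CJC Rform_sqr.
by rewrite -[RHS]mul1mx -JCJ -!mulmxA Rform_sqr mulmx1.
Qed.

Lemma symplectic_unit_col n (C : 'M['F_2]_(2 * n)) (i : 'I_(2 * n)) :
  symplectic C -> row i C = row i 1%:M ->
  col (rev_ord i) C = col (rev_ord i) 1%:M.
Proof.
(* Row [i] of [C R_2n C^T = R_2n] reads: column [2n+1-i] of [C] is a unit. *)
move=> /symplectic_tr CJC rowC; apply: trmx_inj.
rewrite !tr_col trmx1 -[C^T]mul1mx row_mul -!row_Rform -row_mul.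
by rewrite -{2}CJC -mulmxA [RHS]row_mul rowC -[RHS]row_mul mul1mx row_mul.
Qed.

Lemma col_mul (R : pzSemiRingType) p q s (A : 'M[R]_(p, q)) (B : 'M_(q, s)) j :
  col j (A *m B) = A *m col j B.
Proof. by rewrite !colE mulmxA. Qed.

Section Pimx.

Variables (m n r : nat) (alpha : 'I_r -> 'I_m) (beta : 'I_r -> 'I_(2 * n)).

Lemma row_Pimx k : injective alpha ->
  row (alpha k) (Pimx alpha beta) = row (beta k) 1%:M.
Proof.
move=> alpha_inj; apply/rowP => b; rewrite !mxE (bigD1 k) //= eqxx big1 ?addr0.
  by rewrite eq_sym.
by move=> k' /negbTE nk'k; rewrite (inj_eq alpha_inj) nk'k.
Qed.

Lemma col_Pimx k : injective beta ->
  col (beta k) (Pimx alpha beta) = col (alpha k) 1%:M.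
Proof.
move=> beta_inj; apply/colP => a; rewrite !mxE (bigD1 k) //= eqxx andbT.
rewrite big1 ?addr0 ?(eq_sym a) // => k' /negbTE nk'k.
by rewrite (inj_eq beta_inj) nk'k andbF.
Qed.

Lemma col_Pimx_notin b : (forall k, beta k != b) -> col b (Pimx alpha beta) = 0.
Proof.
move=> notin; apply/colP => a; rewrite !mxE big1 // => k _.
by rewrite (negbTE (notin k)) andbF.
Qed.

End Pimx.

Section Intertwining.

Variables (m n r : nat) (alpha : 'I_r -> 'I_m) (beta : 'I_r -> 'I_(2 * n)).
Variables (L : 'M['F_2]_m) (R : 'M['F_2]_(2 * n)).
Hypotheses (alpha_inj : injective alpha) (beta_inj : injective beta).
Hypothesis LP_PR : L *m Pimx alpha beta = Pimx alpha beta *m R.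

Lemma intertwined_row k : row (beta k) R = row (alpha k) (L *m Pimx alpha beta).
Proof. by rewrite LP_PR row_mul row_Pimx // -row_mul mul1mx. Qed.

Lemma intertwined_entry_col (k : 'I_r) b :
  R (beta k) b = (L *m col b (Pimx alpha beta)) (alpha k) 0.
Proof. by have /rowP/(_ b) := intertwined_row k; rewrite -col_mul !mxE. Qed.

Lemma intertwined_entry k k' : R (beta k) (beta k') = L (alpha k) (alpha k').
Proof. by rewrite intertwined_entry_col col_Pimx // -col_mul mulmx1 mxE. Qed.

Lemma intertwined_entry_notin k b :
  (forall k', beta k' != b) -> R (beta k) b = 0.
Proof.
by move=> notin; rewrite intertwined_entry_col col_Pimx_notin // mulmx0 mxE.
Qed.

End Intertwining.

Lemma in_B_entry n (T : rel 'I_(2 * n)) (C : 'M['F_2]_(2 * n)) i j :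
  in_B T C -> ~~ T i j -> C i j = 1%:M i j.
Proof. by move=> [offT _] /offT /eqP; rewrite !mxE subr_eq0 => /eqP. Qed.

Section TCR.

Variables (n r : nat) (beta : 'I_r -> 'I_(2 * n)).
Hypothesis qinj : qubit_injective beta.

Lemma T_TCR_img_lt (k k' : 'I_r) :
  (k' < k)%N -> ~~ T_TCR beta (beta k) (beta k').
Proof.
move=> lt_k'k; rewrite negb_or; apply/andP; split; apply/existsP.
  move=> [k0 /and3P[/eqP/(qubit_injective_inj qinj) -> _ /forallP/(_ k')]].
  by rewrite lt_k'k eqxx.
move=> [k0 /and3P[/eqP E _ _]].
by move: (qubit_injective_rev k0 k' qinj); rewrite E eqxx.
Qed.

Variables (m : nat) (alpha : 'I_r -> 'I_m).
Variables (L : 'M['F_2]_m) (R : 'M['F_2]_(2 * n)).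
Hypotheses (RB : in_B (T_TCR beta) R) (Llow : lower_unitri L).
Hypothesis alpha_inc : forall x y : 'I_r, (x < y)%N -> (alpha x < alpha y)%N.
Hypothesis LP_PR : L *m Pimx alpha beta = Pimx alpha beta *m R.

Lemma intertwined_unit_row k : row (beta k) R = row (beta k) 1%:M.
Proof.
have alpha_inj : injective alpha by apply: inc_inj; apply: le_mono.
have beta_inj := qubit_injective_inj qinj.
apply/rowP => j; rewrite !mxE.
have [/existsP[k' /eqP <-]|] := boolP [exists k', beta k' == j]; last first.
  rewrite negb_exists => /forallP notin.
  by rewrite (intertwined_entry_notin alpha_inj LP_PR) // (negbTE (notin k)).
have entry := intertwined_entry alpha_inj beta_inj LP_PR.
case: (ltngtP k' k) => [lt_k'k | lt_kk' | /val_inj ->].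
- by rewrite (in_B_entry RB (T_TCR_img_lt lt_k'k)) mxE.
- by rewrite entry Llow.1 ?alpha_inc // (inj_eq beta_inj) -val_eqE ltn_eqF.
- by rewrite entry Llow.2 eqxx.
Qed.

End TCR.

Theorem lemma9 (n r : nat) (beta : 'I_r -> 'I_(2 * n)) (R : 'M['F_2]_(2 * n)) :
  qubit_injective beta ->
  in_B (T_TCR beta) R ->
  (exists (m : nat) (L : 'M['F_2]_m) (alpha : 'I_r -> 'I_m),
      [/\ lower_unitri L,
          (forall x y : 'I_r, (x < y)%N -> (alpha x < alpha y)%N) &
          L *m Pimx alpha beta = Pimx alpha beta *m R]) ->
  R = 1%:M.
Proof.
move=> qinj RB [m [L [alpha [Llow alpha_inc LP_PR]]]].
have rowR k := intertwined_unit_row qinj RB Llow alpha_inc LP_PR k.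
have colR k := symplectic_unit_col RB.2 (rowR k).
apply/matrixP => i j; have [|notT] := boolP (T_TCR beta i j); last first.
  exact: in_B_entry RB notT.
case/orP => /existsP[k /and3P[/eqP Ebeta _ _]].
  by have /rowP/(_ j) := rowR k; rewrite Ebeta !mxE.
have -> : j = rev_ord (beta k) by rewrite Ebeta rev_ordK.
by have /colP/(_ i) := colR k; rewrite !mxE.
Qed.
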